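(* Let $\mathbf L=(L,\vee,\wedge,{}',0,1)$ be a bounded lattice with complementation $'$. Then the following are equivalent: (a) for all $x,y,z\in L$, $x\odot y\le z$ implies $x\le y\to z$; (b) $\mathbf L$ satisfies the identity $x\vee y'\approx y'\vee\big((x\vee y')\wedge y\big)$; (c) for all $x,y\in L$, $x'\le y$ implies $y=x'\vee(y\wedge x)$. Furthermore, the following are equivalent: (d) for all $x,y,z\in L$, $x\le y\to z$ implies $x\odot y\le z$; (e) $\mathbf L$ satisfies the identity $x\wedge y\approx x\wedge\big((x\wedge y)\vee x'\big)$; (f) for all $x,y\in L$, $x\le y$ implies $x=(y'\vee x)\wedge y$.
   Context: A complementation on a bounded lattice is a unary operation $'$ with $x\vee x'=1$ and $x\wedge x'=0$ for all $x$ (no involutivity or antitonicity is assumed). The Sasaki operations are $x\odot y=(x\vee y')\wedge y$ and $x\to y=x'\vee(x\wedge y)$. *)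

From HB Require Import structures.
From mathcomp Require Import all_boot all_order.
Set Implicit Arguments. Unset Strict Implicit. Unset Printing Implicit Defensive.
Import Order.LTheory.
Local Open Scope order_scope.

Definition complementation (d : Order.disp_t) (L : tbLatticeType d) (c : L -> L) : Prop :=
  forall x : L, x `|` c x = \top /\ x `&` c x = \bot.

Definition sasaki_prod (d : Order.disp_t) (L : tbLatticeType d) (c : L -> L) (x y : L) : L :=
  (x `|` c y) `&` y.
Definition sasaki_impl (d : Order.disp_t) (L : tbLatticeType d) (c : L -> L) (x y : L) : L :=
  c x `|` (x `&` y).

From mathcomp Require Import all_boot all_order.
Import Order.LTheory.
Local Open Scope order_scope.

(* Each equivalence comes from instantiating the quantified condition at a
   well-chosen point ([z := (x `|` y') `&` y] for (a)->(b), [z := x `&` y] for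
   (d)->(e)) and absorption. *)

Section SasakiConditions.

Variables (d : Order.disp_t) (L : tbLatticeType d) (c : L -> L).

Lemma join_sasaki_prod_of_adjoint_l :
  (forall x y z : L, sasaki_prod c x y <= z -> x <= sasaki_impl c y z) ->
  forall x y : L, x `|` c y = c y `|` ((x `|` c y) `&` y).
Proof.
move=> adj x y; apply/le_anti; rewrite !leUx leUr leIl leUl !andbT.
by have := adj x y _ (lexx _); rewrite /sasaki_impl (meet_r (leIr _ _)).
Qed.

Lemma adjoint_l_of_join_sasaki_prod :
  (forall x y : L, x `|` c y = c y `|` ((x `|` c y) `&` y)) ->
  forall x y z : L, sasaki_prod c x y <= z -> x <= sasaki_impl c y z.
Proof.
move=> eqxy x y z le_prod_z; apply: (le_trans (leUl x (c y))).
by rewrite eqxy; apply: leU2 => //; rewrite lexI leIr.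
Qed.

Lemma decomp_of_join_sasaki_prod :
  (forall x y : L, x `|` c y = c y `|` ((x `|` c y) `&` y)) ->
  forall x y : L, c x <= y -> y = c x `|` (y `&` x).
Proof. by move=> eqxy x y /join_l le_cx_y; have := eqxy y x; rewrite le_cx_y. Qed.

Lemma join_sasaki_prod_of_decomp :
  (forall x y : L, c x <= y -> y = c x `|` (y `&` x)) ->
  forall x y : L, x `|` c y = c y `|` ((x `|` c y) `&` y).
Proof. by move=> dec x y; rewrite {1}(dec y (x `|` c y) (leUr _ _)). Qed.

Lemma meet_sasaki_impl_of_adjoint_r :
  (forall x y z : L, x <= sasaki_impl c y z -> sasaki_prod c x y <= z) ->
  forall x y : L, x `&` y = x `&` ((x `&` y) `|` c x).
Proof.
move=> adj x y; apply/le_anti; rewrite lexI leIl leUl /=.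
set w := x `&` ((x `&` y) `|` c x).
have w_le_impl : w <= sasaki_impl c x (x `&` y).
  by rewrite /sasaki_impl meetA meetxx joinC leIr.
apply: le_trans (adj _ _ _ w_le_impl).
by rewrite lexI leUl /w leIl.
Qed.

Lemma adjoint_r_of_meet_sasaki_impl :
  (forall x y : L, x `&` y = x `&` ((x `&` y) `|` c x)) ->
  forall x y z : L, x <= sasaki_impl c y z -> sasaki_prod c x y <= z.
Proof.
move=> eqxy x y z le_x_impl.
have prod_le : sasaki_prod c x y <= sasaki_prod c (sasaki_impl c y z) y.
  by apply: leI2 => //; apply: leU2.
have impl_prod : sasaki_prod c (sasaki_impl c y z) y = y `&` z.
  by rewrite /sasaki_prod /sasaki_impl (joinC (c y)) -joinA joinxx meetC -eqxy.
by rewrite impl_prod in prod_le; apply: le_trans prod_le (leIr _ _).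
Qed.

Lemma decomp_of_meet_sasaki_impl :
  (forall x y : L, x `&` y = x `&` ((x `&` y) `|` c x)) ->
  forall x y : L, x <= y -> x = (c y `|` x) `&` y.
Proof.
move=> eqxy x y /meet_r le_xy.
by have := eqxy y x; rewrite le_xy => {1}->; rewrite meetC joinC.
Qed.

Lemma meet_sasaki_impl_of_decomp :
  (forall x y : L, x <= y -> x = (c y `|` x) `&` y) ->
  forall x y : L, x `&` y = x `&` ((x `&` y) `|` c x).
Proof.
by move=> dec x y; rewrite {1}(dec (x `&` y) x (leIl _ _)) meetC joinC.
Qed.

End SasakiConditions.

Theorem theorem1 (d : Order.disp_t) (L : tbLatticeType d) (c : L -> L)
  (hc : complementation c) :
  ((forall x y z : L, sasaki_prod c x y <= z -> x <= sasaki_impl c y z) <->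
   (forall x y : L, x `|` c y = c y `|` ((x `|` c y) `&` y))) /\
  ((forall x y : L, x `|` c y = c y `|` ((x `|` c y) `&` y)) <->
   (forall x y : L, c x <= y -> y = c x `|` (y `&` x))) /\
  ((forall x y z : L, x <= sasaki_impl c y z -> sasaki_prod c x y <= z) <->
   (forall x y : L, x `&` y = x `&` ((x `&` y) `|` c x))) /\
  ((forall x y : L, x `&` y = x `&` ((x `&` y) `|` c x)) <->
   (forall x y : L, x <= y -> x = (c y `|` x) `&` y)).
Proof.
split; [split|split; [split|split; split]].
- exact: join_sasaki_prod_of_adjoint_l.
- exact: adjoint_l_of_join_sasaki_prod.
- exact: decomp_of_join_sasaki_prod.
- exact: join_sasaki_prod_of_decomp.
- exact: meet_sasaki_impl_of_adjoint_r.
- exact: adjoint_r_of_meet_sasaki_impl.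
- exact: decomp_of_meet_sasaki_impl.
- exact: meet_sasaki_impl_of_decomp.
Qed.
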